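(* Let $X$ be an infinite regular space. Then there exists a sequence $(G_n)_{n=1}^\infty$ of pairwise disjoint infinite open subsets of $X$.
   Context: Regular spaces are assumed to be $T_1$ (points are closed). *)

From HB Require Import structures.
From mathcomp Require Import all_boot all_order all_algebra.
From mathcomp Require Import all_classical all_reals all_analysis.

From HB Require Import structures.
From mathcomp Require Import all_boot all_order all_algebra.
From mathcomp Require Import all_classical all_reals all_analysis.
From Stdlib Require Cantor.
Local Open Scope classical_set_scope.

(* In a regular T1 space two distinct points have open neighbourhoods U, U'
   with disjoint closures; hence W \ cl U and W \ cl U' cover an open set W,
   and if W is infinite one of them is infinite.  So every infinite open W
   contains a nonempty open V and a disjoint infinite open W', and iterating
   inside W' yields pairwise disjoint nonempty open sets V_0, V_1, ...
   Splitting the indices into infinitely many infinite blocks and taking the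
   unions of the V_k over each block gives the required infinite open sets. *)

Lemma infinite_bigcup_trivIset (I T : Type) (D : set I) (F : I -> set T) :
  infinite_set D -> (forall i, D i -> F i !=set0) -> trivIset D F ->
  infinite_set (\bigcup_(i in D) F i).
Proof.
move=> infD F0 tF; have [i0 Di0] := infinite_setN0 infD.
have [x0 _] := F0 i0 Di0.
have /choice[p Fp] : forall i, exists x, D i -> F i x.
  move=> i; case: (pselect (D i)) => [Di|NDi]; last by exists x0.
  by have [x Fx] := F0 i Di; exists x.
have p_inj : {in D &, injective p}.
  move=> i j; rewrite !in_setE => Di Dj pij; apply: tF => //; exists (p i).
  by split; [exact: Fp | rewrite pij; exact: Fp].
apply: (@sub_infinite_set _ (p @` D)).
  by move=> _ [i Di <-]; exists i => //; exact: Fp.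
by rewrite (eq_finite_set (inj_card_eq p_inj)).
Qed.

Lemma nat_trivIset_infinite :
  exists D : nat -> set nat, trivIset setT D /\ forall n, infinite_set (D n).
Proof.
have to_nat_inj : injective Cantor.to_nat.
  exact: can_inj Cantor.cancel_of_to.
exists (fun n => range (fun j => Cantor.to_nat (n, j))); split.
  by move=> n m _ _ [_ [[i _ <-] [j _ /to_nat_inj[]]]].
move=> n; rewrite (eq_finite_set (inj_card_eq _)).
  exact: infinite_nat.
by move=> i j _ _ /to_nat_inj[].
Qed.

Section regular_accessible.
Variable X : topologicalType.
Hypotheses (X_T1 : accessible_space X) (X_regular : regular_space X).

Lemma regular_open_closure_sub {x : X} {A : set X} : open A -> A x ->
  exists2 U, open U /\ U x & closure U `<=` A.
Proof.
move=> oA Ax; have [U xU clUA] := X_regular x _ (open_nbhs_nbhs (conj oA Ax)).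
exists U°; first by split; [exact: open_interior | exact: xU].
by apply: subset_trans clUA; apply: closureS; exact: interior_subset.
Qed.

Lemma open_disjoint_closures {x y : X} : x != y ->
  exists U V, [/\ open U, open V, U x, V y & closure U `&` closure V = set0].
Proof.
move=> /X_T1[A [oA /set_mem Ax /set_mem NAy]].
have [U [oU Ux] clUA] := regular_open_closure_sub oA Ax.
have oNclU : open (~` closure U) by exact/closed_openC/closed_closure.
have NclUy : (~` closure U) y by move=> /clUA.
have [V [oV Vy] clVU] := regular_open_closure_sub oNclU NclUy.
by exists U, V; split => //; apply/disjoints_subset => z /clVU.
Qed.

Definition open_splitting (W V W' : set X) :=
  [/\ open V /\ V !=set0, open W' /\ infinite_set W', V `|` W' `<=` W
    & V `&` W' = set0].

Lemma open_infinite_split {W : set X} : open W -> infinite_set W ->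
  exists V W', open_splitting W V W'.
Proof.
move=> oW infW; have [x Wx] := infinite_setN0 infW.
have [y [Wy /= /eqP yx]] := infinite_setN0 (infinite_setD infW (finite_set1 x)).
have [U [U' [oU oU' Uy U'x clUU']]] := open_disjoint_closures yx.
have split_at (V : set X) z : open V -> V z -> W z ->
    infinite_set (W `\` closure V) -> exists V W', open_splitting W V W'.
  move=> oV Vz Wz infW'; exists (V `&` W), (W `\` closure V); split.
  - by split; [exact: openI | exists z].
  - by split=> //; apply: openI => //; exact/closed_openC/closed_closure.
  - by move=> t [[]|[]].
  - by apply/disjoints_subset => t [Vt _] [_]; apply; exact: subset_closure.
have [finU|infU] := pselect (finite_set (W `\` closure U)); last first.
  exact: (split_at U y).
apply: (split_at U' x) => // finU'; apply: infW.
apply: (@sub_finite_set _ _ ((W `\` closure U) `|` (W `\` closure U'))).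
  move=> t Wt; case: (pselect (closure U t)) => [cUt|]; [right | by left].
  by split=> // cU't; suff : (closure U `&` closure U') t by rewrite clUU'.
by rewrite finite_setU.
Qed.

Lemma open_trivIset_seq : infinite_set [set: X] ->
  exists V : nat -> set X,
    [/\ forall n, open (V n), forall n, V n !=set0 & trivIset setT V].
Proof.
move=> infX.
have /choice[divide divide_spec] : forall W : set X, exists VW : set X * set X,
    open W -> infinite_set W -> open_splitting W VW.1 VW.2.
  move=> W; case: (pselect (open W /\ infinite_set W)) => [[oW infW]|NW].
    by have [V [W' ?]] := open_infinite_split oW infW; exists (V, W').
  by exists (set0, set0) => oW infW; case: NW.
pose W n := iter n (fun W => (divide W).2) setT.
pose V n := (divide (W n)).1.
have W_open_infinite n : open (W n) /\ infinite_set (W n).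
  elim: n => [|n [oW infW]]; first by split; [exact: openT|].
  by have [_ []] := divide_spec _ oW infW.
have W_split n : open_splitting (W n) (V n) (W n.+1).
  by have [oW infW] := W_open_infinite n; exact: divide_spec.
have W_nonincr n m : (n <= m)%N -> W m `<=` W n.
  elim: m => [|m IHm]; first by rewrite leqn0 => /eqP ->.
  rewrite leq_eqVlt ltnS => /predU1P[-> //|/IHm]; apply: subset_trans.
  by have [_ _ VW _] := W_split m; move=> t W't; apply: VW; right.
exists V; split=> [n|n|]; first by have [[]] := W_split n.
  by have [[]] := W_split n.
apply: ltn_trivIset => n m mn; apply/disjoints_subset => t Vmt Vnt.
have [_ _ _ VW0] := W_split m.
suff : (V m `&` W m.+1) t by rewrite VW0.
split=> //; apply: (W_nonincr m.+1 n mn).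
by have [_ _ VW _] := W_split n; apply: VW; left.
Qed.

End regular_accessible.

Theorem lemma5p2 (X : topologicalType) :
  accessible_space X -> regular_space X -> infinite_set [set: X] ->
  exists G : nat -> set X,
    [/\ forall n, open (G n),
        forall n, infinite_set (G n) &
        forall n m, n <> m -> G n `&` G m = set0].
Proof.
move=> X_T1 X_regular infX.
have [V [oV V0 tV]] := @open_trivIset_seq X X_T1 X_regular infX.
have [D [tD infD]] := nat_trivIset_infinite.
exists (fun n => \bigcup_(k in D n) V k); split.
- by move=> n; apply: bigcup_open => k _; exact: oV.
- move=> n; apply: infinite_bigcup_trivIset => [|k _|]; first exact: infD.
    exact: V0.
  exact: sub_trivIset (subsetT _) tV.
- have tG : trivIset setT (fun n => \bigcup_(k in D n) V k).
    exact: trivIsetT_bigcup tD (sub_trivIset (subsetT _) tV).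
  by move=> n m /eqP; apply: (trivIsetP.1 tG).
Qed.
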